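(* Let $(x_{ij})$ lie in the polytope of the second level Poisson Matching LP, and let $f:[0,1]^2\to\mathbb{R}$ be normalized and DR submodular. Fix $j_1\ne j_2\in J$, with $x_{j}=\sum_ix_{ij}$. Let $\lambda_1^*,\lambda_2^*\ge0$ be the unique solution of \[ x_{j_1}=1-P_0(\lambda_1^* ),\qquad x_{j_2}=\big(2-P_0(\lambda_2^* )-P_1(\lambda_2^* )\big)-\big(1-P_0(\min\{\lambda_1^*,\lambda_2^*\})\big). \] With $\rho_{ij}=x_{ij}/\lambda_i$, the following holds. If $\lambda_1^*\le\lambda_2^*$, then \[ \sum_{i\in I}\lambda_i f(\rho_{ij_1},\rho_{ij_1}+\rho_{ij_2})\ge\int_0^{\lambda_1^*}f(P_0(\lambda),P_1(\lambda))\,d\lambda+\int_{\lambda_1^*}^{\lambda_2^*}f(0,P_1(\lambda))\,d\lambda . \] If $\lambda_1^*>\lambda_2^*$, then \[ \sum_{i\in I}\lambda_i f(\rho_{ij_1},\rho_{ij_1}+\rho_{ij_2})\ge\int_0^{\lambda_2^*}f(P_0(\lambda),P_1(\lambda))\,d\lambda+\int_{\lambda_2^*}^{\lambda_1^*}f(P_0(\lambda),P_0(\lambda))\,d\lambda . \]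
   Context: $I$ is a finite set of online types with rates $\lambda_i>0$, $J$ a finite set of offline vertices, and $E\subseteq I\times J$ the edges, with $x_{ij}=0$ for non-edges. $\lambda_S=\sum_{i\in S}\lambda_i$ and $P_k(\lambda)=e^{-\lambda}\sum_{m=0}^k\lambda^m/m!$. The polytope of the second level Poisson Matching LP is the set of $x\ge0$ with: - $\sum_jx_{ij}\le\lambda_i$ for all $i$; - $\sum_{i\in S}x_{ij}\le1-P_0(\lambda_S)$ for all $S\subseteq I$ and $j\in J$; - $\sum_{i\in S}(x_{ij}+x_{ij'})\le(1-P_0(\lambda_S))+(1-P_1(\lambda_S))$ for all $S\subseteq I$ and distinct $j,j'\in J$. A smooth $f:[0,1]^2\to\mathbb{R}$ is DR submodular if all entries of its Hessian are $\le0$ everywhere. It is normalized if $f(0,0)=0$. *)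

From mathcomp Require Import ssreflect ssrbool ssrfun eqtype ssrnat seq choice fintype finset bigop.
From Stdlib Require Import Reals.
From Coquelicot Require Import Coquelicot.
Open Scope R_scope.

Definition rsum {T : finType} (A : pred T) (F : T -> R) : R :=
  \big[Rplus/0]_(i in A) F i.

Definition Pk (k : nat) (l : R) : R :=
  exp (- l) * sum_f_R0 (fun m => l ^ m / INR (Factorial.fact m)) k.

Definition lamS {I : finType} (lam : I -> R) (S : {set I}) : R :=
  rsum (mem S) lam.

Definition in_PM2 {I J : finType} (lam : I -> R) (E : I -> J -> bool)
    (x : I -> J -> R) : Prop :=
  (forall i j, 0 <= x i j) /\
  (forall i j, ~~ E i j -> x i j = 0) /\
  (forall i, rsum predT (fun j => x i j) <= lam i) /\
  (forall (S : {set I}) (j : J),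
      rsum (mem S) (fun i => x i j) <= 1 - Pk 0 (lamS lam S)) /\
  (forall (S : {set I}) (j j' : J), j <> j' ->
      rsum (mem S) (fun i => x i j + x i j')
        <= (1 - Pk 0 (lamS lam S)) + (1 - Pk 1 (lamS lam S))).

Definition d1 (f : R -> R -> R) (u v : R) : R := Derive (fun t => f t v) u.
Definition d2 (f : R -> R -> R) (u v : R) : R := Derive (fun t => f u t) v.

Definition jcont (g : R -> R -> R) (u v : R) : Prop :=
  continuous (fun p : R * R => g (fst p) (snd p)) (u, v).

(* f is (at least) C^2 on an open neighbourhood of [0,1]^2, so that its
   Hessian is defined everywhere on [0,1]^2 *)
Definition smooth_on_square (f : R -> R -> R) : Prop :=
  exists eps : R, 0 < eps /\
  forall u v, - eps < u < 1 + eps -> - eps < v < 1 + eps ->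
    ex_derive (fun t => f t v) u /\ ex_derive (fun t => f u t) v /\
    ex_derive (fun t => d1 f t v) u /\ ex_derive (fun t => d1 f u t) v /\
    ex_derive (fun t => d2 f t v) u /\ ex_derive (fun t => d2 f u t) v /\
    jcont f u v /\
    jcont (d1 f) u v /\ jcont (d2 f) u v /\
    jcont (fun a b => d1 (d1 f) a b) u v /\ jcont (fun a b => d2 (d1 f) a b) u v /\
    jcont (fun a b => d1 (d2 f) a b) u v /\ jcont (fun a b => d2 (d2 f) a b) u v.

Definition DR_submodular (f : R -> R -> R) : Prop :=
  smooth_on_square f /\
  forall u v, 0 <= u <= 1 -> 0 <= v <= 1 ->
    d1 (d1 f) u v <= 0 /\ d2 (d1 f) u v <= 0 /\
    d1 (d2 f) u v <= 0 /\ d2 (d2 f) u v <= 0.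

Definition normalized (f : R -> R -> R) : Prop := f 0 0 = 0.

(* Lay the online types on a time axis, type i occupying an interval of
   length lam i, and write rho1 i, rho12 i for the two arguments of f on the
   left-hand side.  As f 0 0 = 0, the right-hand side is the integral over
   [0, Lam] of f (astar s) (bstar s) for an explicit nonincreasing profile,
   whose primitives are the largest masses a set of types of total rate t may
   send to j1, resp. to {j1, j2}.
   1. Ordering the types by increasing d2 f (rho1 i) (rho12 i), concavity of f
      in its second argument and summation by parts against the LP constraints
      on {j1, j2} give  sum lam i * f (rho1 i) (rho12 i) >= sum_i int_{I_i} f (rho1 i) bstar.
   2. Since d2 f is antitone in its first argument and bstar is nonincreasing,
      reordering the types by decreasing rho1 i (adjacent swaps) only lowers
      the latter sum.
   3. Concavity in the first argument and a continuous summation by parts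
      inside each interval, now against the constraints on j1 alone, give
      sum_i int_{I_i} f (rho1 i) bstar >= int_0^Lam f astar bstar. *)

From Pilot Require Import Defs.
From HB Require Import structures.
From mathcomp Require Import ssreflect ssrbool ssrfun eqtype ssrnat seq choice fintype finset bigop.
From Stdlib Require Import Reals Lra Psatz.
From Coquelicot Require Import Coquelicot.
(* [Reals] also defines a [d1], which would hide the partial derivative. *)
Import Pilot.Defs.
Open Scope R_scope.

Lemma MVT_is_derive (g dg : R -> R) x y :
  (forall t, x <= t <= y -> is_derive g t (dg t)) -> x <= y ->
  exists c, x <= c <= y /\ g y - g x = dg c * (y - x).
Proof.
move=> Hd Hxy.
have := MVT_gen g x y dg; rewrite Rmin_left // Rmax_right //; apply.
- by move=> t Ht; apply: Hd; lra.
- move=> t Ht; apply/continuity_pt_filterlim/ex_derive_continuous.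
  by exists (dg t); apply: Hd.
Qed.

Lemma antitone_of_derive_nonpos (g dg : R -> R) lo hi x y :
  (forall t, lo <= t <= hi -> is_derive g t (dg t)) ->
  (forall t, lo <= t <= hi -> dg t <= 0) ->
  lo <= x -> x <= y -> y <= hi -> g y <= g x.
Proof.
move=> Hd Hn Hx Hxy Hy.
have [c [Hc E]] : exists c, x <= c <= y /\ g y - g x = dg c * (y - x).
  by apply: MVT_is_derive => // t Ht; apply: Hd; lra.
have := Hn c ltac:(lra); nra.
Qed.

Lemma le_tangent_of_derive_antitone (g dg : R -> R) lo hi x y :
  (forall t, lo <= t <= hi -> is_derive g t (dg t)) ->
  (forall s t, lo <= s -> s <= t -> t <= hi -> dg t <= dg s) ->
  lo <= x <= hi -> lo <= y <= hi -> g y <= g x + dg x * (y - x).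
Proof.
move=> Hd Hm Hx Hy.
have Hd' u v : lo <= u -> v <= hi -> forall t, u <= t <= v -> is_derive g t (dg t).
  by move=> hu hv t ht; apply: Hd; lra.
case: (Rle_dec x y) => Hxy.
- have [c [Hc E]] := MVT_is_derive g dg x y (Hd' x y ltac:(lra) ltac:(lra)) Hxy.
  have := Hm x c ltac:(lra) ltac:(lra) ltac:(lra); nra.
- have [c [Hc E]] := MVT_is_derive g dg y x (Hd' y x ltac:(lra) ltac:(lra)) ltac:(lra).
  have := Hm c x ltac:(lra) ltac:(lra) ltac:(lra); nra.
Qed.

Definition cont_on_square (Phi : R -> R -> R) : Prop :=
  forall u v, 0 <= u <= 1 -> 0 <= v <= 1 ->
    continuous (fun z : R * R => Phi z.1 z.2) (u, v).

Section DRSubmodular.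
Variable f : R -> R -> R.
Hypothesis Hf : DR_submodular f.

Lemma DR_smooth u v : 0 <= u <= 1 -> 0 <= v <= 1 ->
    ex_derive (fun t => f t v) u /\ ex_derive (fun t => f u t) v /\
    ex_derive (fun t => d1 f t v) u /\ ex_derive (fun t => d1 f u t) v /\
    ex_derive (fun t => d2 f t v) u /\ ex_derive (fun t => d2 f u t) v /\
    jcont f u v /\
    jcont (d1 f) u v /\ jcont (d2 f) u v /\
    jcont (fun a b => d1 (d1 f) a b) u v /\ jcont (fun a b => d2 (d1 f) a b) u v /\
    jcont (fun a b => d1 (d2 f) a b) u v /\ jcont (fun a b => d2 (d2 f) a b) u v.
Proof. by case: Hf => [[eps [He H]] _] Hu Hv; apply: H; lra. Qed.

Lemma DR_hessian_nonpos u v : 0 <= u <= 1 -> 0 <= v <= 1 ->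
    d1 (d1 f) u v <= 0 /\ d2 (d1 f) u v <= 0 /\
    d1 (d2 f) u v <= 0 /\ d2 (d2 f) u v <= 0.
Proof. by case: Hf => _; apply. Qed.

Lemma DR_continuous : cont_on_square f.
Proof. by move=> u v hu hv; have := DR_smooth u v hu hv; intuition. Qed.

Lemma DR_continuous_d1 : cont_on_square (d1 f).
Proof. by move=> u v hu hv; have := DR_smooth u v hu hv; intuition. Qed.

Lemma DR_d1_antitone_l u1 u2 v : 0 <= u1 -> u1 <= u2 -> u2 <= 1 -> 0 <= v <= 1 ->
  d1 f u2 v <= d1 f u1 v.
Proof.
move=> h1 h2 h3 hv.
apply: (antitone_of_derive_nonpos (fun t => d1 f t v) (fun t => d1 (d1 f) t v) 0 1) => // t Ht.
- by apply: Derive_correct; have := DR_smooth t v Ht hv; intuition.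
- by have := DR_hessian_nonpos t v Ht hv; intuition.
Qed.

Lemma DR_d1_antitone_r u v1 v2 : 0 <= u <= 1 -> 0 <= v1 -> v1 <= v2 -> v2 <= 1 ->
  d1 f u v2 <= d1 f u v1.
Proof.
move=> hu h1 h2 h3.
apply: (antitone_of_derive_nonpos (fun t => d1 f u t) (fun t => d2 (d1 f) u t) 0 1) => // t Ht.
- by apply: Derive_correct; have := DR_smooth u t hu Ht; intuition.
- by have := DR_hessian_nonpos u t hu Ht; intuition.
Qed.

Lemma DR_d2_antitone_l u1 u2 v : 0 <= u1 -> u1 <= u2 -> u2 <= 1 -> 0 <= v <= 1 ->
  d2 f u2 v <= d2 f u1 v.
Proof.
move=> h1 h2 h3 hv.
apply: (antitone_of_derive_nonpos (fun t => d2 f t v) (fun t => d1 (d2 f) t v) 0 1) => // t Ht.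
- by apply: Derive_correct; have := DR_smooth t v Ht hv; intuition.
- by have := DR_hessian_nonpos t v Ht hv; intuition.
Qed.

Lemma DR_d2_antitone_r u v1 v2 : 0 <= u <= 1 -> 0 <= v1 -> v1 <= v2 -> v2 <= 1 ->
  d2 f u v2 <= d2 f u v1.
Proof.
move=> hu h1 h2 h3.
apply: (antitone_of_derive_nonpos (fun t => d2 f u t) (fun t => d2 (d2 f) u t) 0 1) => // t Ht.
- by apply: Derive_correct; have := DR_smooth u t hu Ht; intuition.
- by have := DR_hessian_nonpos u t hu Ht; intuition.
Qed.

Lemma DR_tangent_l u1 u2 v : 0 <= u1 <= 1 -> 0 <= u2 <= 1 -> 0 <= v <= 1 ->
  f u2 v <= f u1 v + d1 f u1 v * (u2 - u1).
Proof.
move=> h1 h2 hv.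
apply: (le_tangent_of_derive_antitone (fun t => f t v) (fun t => d1 f t v) 0 1) => //.
- by move=> t Ht; apply: Derive_correct; have := DR_smooth t v Ht hv; intuition.
- by move=> s t *; apply: DR_d1_antitone_l.
Qed.

Lemma DR_tangent_r u v1 v2 : 0 <= u <= 1 -> 0 <= v1 <= 1 -> 0 <= v2 <= 1 ->
  f u v2 <= f u v1 + d2 f u v1 * (v2 - v1).
Proof.
move=> hu h1 h2.
apply: (le_tangent_of_derive_antitone (fun t => f u t) (fun t => d2 f u t) 0 1) => //.
- by move=> t Ht; apply: Derive_correct; have := DR_smooth u t hu Ht; intuition.
- by move=> s t *; apply: DR_d2_antitone_r.
Qed.

Lemma DR_increment_antitone u1 u2 v1 v2 : 0 <= u1 -> u1 <= u2 -> u2 <= 1 ->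
  0 <= v1 -> v1 <= v2 -> v2 <= 1 ->
  f u2 v2 - f u1 v2 <= f u2 v1 - f u1 v1.
Proof.
move=> h1 h2 h3 h4 h5 h6.
apply: (antitone_of_derive_nonpos (fun t => f u2 t - f u1 t) (fun t => d2 f u2 t - d2 f u1 t) 0 1)
  => // t Ht.
- apply: (is_derive_minus (fun t => f u2 t) (fun t => f u1 t)); apply: Derive_correct.
  + by have := DR_smooth u2 t ltac:(lra) Ht; intuition.
  + by have := DR_smooth u1 t ltac:(lra) Ht; intuition.
- have := DR_d2_antitone_l u1 u2 t h1 h2 h3 Ht; lra.
Qed.

End DRSubmodular.

Lemma Pk0E s : Pk 0 s = exp (- s).
Proof. rewrite /Pk /=; field. Qed.

Lemma Pk1E s : Pk 1 s = exp (- s) * (1 + s).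
Proof. rewrite /Pk /=; field. Qed.

Lemma exp_le_compat x y : x <= y -> exp x <= exp y.
Proof. by case=> [h|->]; [left; apply: exp_increasing|lra]. Qed.

Lemma Pk0_bounds s : 0 <= s -> 0 <= Pk 0 s <= 1.
Proof.
move=> hs; rewrite Pk0E; split; first by left; apply: exp_pos.
by rewrite -exp_0; apply: exp_le_compat; lra.
Qed.

Lemma Pk0_le_Pk1 s : 0 <= s -> Pk 0 s <= Pk 1 s.
Proof. by move=> hs; rewrite Pk0E Pk1E; have := exp_pos (- s); nra. Qed.

Lemma exp_opp_shift s t : exp (- s) = exp (- t) * exp (t - s).
Proof. by rewrite -exp_plus; f_equal; ring. Qed.

Lemma Pk1_bounds s : 0 <= s -> 0 <= Pk 1 s <= 1.
Proof.
move=> hs; have := Pk0_bounds s hs; have := Pk0_le_Pk1 s hs => h1 h2.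
split; first lra.
have := exp_opp_shift 0 s; rewrite Ropp_0 exp_0 Rminus_0_r => e.
rewrite Pk1E; have := exp_ineq1_le s; have := exp_pos (- s); nra.
Qed.

Lemma Pk0_antitone s t : s <= t -> Pk 0 t <= Pk 0 s.
Proof. by move=> h; rewrite !Pk0E; apply: exp_le_compat; lra. Qed.

Lemma Pk0_le_inv s t : Pk 0 t <= Pk 0 s -> s <= t.
Proof.
rewrite !Pk0E => h; apply: Rnot_lt_le => hlt.
have := exp_increasing (- s) (- t) ltac:(lra); lra.
Qed.

Lemma Pk1_antitone s t : 0 <= s -> s <= t -> Pk 1 t <= Pk 1 s.
Proof.
move=> hs h; rewrite !Pk1E (exp_opp_shift s t).
have := exp_ineq1_le (t - s); have := exp_pos (- t) => h2 h1.
have : 1 + t <= exp (t - s) * (1 + s) by nra.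
nra.
Qed.

Lemma continuous_Pk0 s : continuous (Pk 0) s.
Proof.
apply: (continuous_ext (fun t => exp (- t))) => [t|]; first by rewrite Pk0E.
by apply: ex_derive_continuous; auto_derive.
Qed.

Lemma continuous_Pk1 s : continuous (Pk 1) s.
Proof.
apply: (continuous_ext (fun t => exp (- t) * (1 + t))) => [t|]; first by rewrite Pk1E.
by apply: ex_derive_continuous; auto_derive.
Qed.

Lemma RInt_Pk0 a b : RInt (Pk 0) a b = Pk 0 a - Pk 0 b.
Proof.
apply: is_RInt_unique; apply: (is_RInt_ext (fun s => exp (- s))) => [s _|].
  by rewrite Pk0E.
have -> : Pk 0 a - Pk 0 b = minus (- exp (- b)) (- exp (- a)).
  by rewrite !Pk0E /minus /plus /opp /=; ring.
apply: (is_RInt_derive (fun s => - exp (- s))) => s _.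
- by auto_derive => //; ring.
- by apply: ex_derive_continuous; auto_derive.
Qed.

Lemma RInt_Pk1 a b : RInt (Pk 1) a b = (Pk 0 a + Pk 1 a) - (Pk 0 b + Pk 1 b).
Proof.
apply: is_RInt_unique; apply: (is_RInt_ext (fun s => exp (- s) * (1 + s))) => [s _|].
  by rewrite Pk1E.
have -> : Pk 0 a + Pk 1 a - (Pk 0 b + Pk 1 b) =
    minus (- (exp (- b) * (2 + b))) (- (exp (- a) * (2 + a))).
  by rewrite !Pk0E !Pk1E /minus /plus /opp /=; ring.
apply: (is_RInt_derive (fun s => - (exp (- s) * (2 + s)))) => s _.
- by auto_derive => //; ring.
- by apply: ex_derive_continuous; auto_derive.
Qed.

Definition tail2 (t : R) : R := 2 - Pk 0 t - Pk 1 t.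

Lemma tail2_lt s t : 0 <= s -> s < t -> tail2 s < tail2 t.
Proof.
move=> hs hst; rewrite /tail2 !Pk0E !Pk1E (exp_opp_shift s t).
have := exp_ineq1 (t - s) ltac:(lra); have := exp_pos (- t) => h2 h1.
have : 2 + t < exp (t - s) * (2 + s) by nra.
nra.
Qed.

Lemma tail2_le_inv s t : 0 <= t -> tail2 s <= tail2 t -> s <= t.
Proof. by move=> ht h; apply: Rnot_lt_le => hlt; have := tail2_lt t s ht hlt; lra. Qed.

Lemma ex_RInt_Rminus (g h : R -> R) a b :
  ex_RInt g a b -> ex_RInt h a b -> ex_RInt (fun t => g t - h t) a b.
Proof.
by move=> hg hh; apply: (ex_RInt_ext (fun t => minus (g t) (h t))) => //; apply: ex_RInt_minus.
Qed.

Lemma RInt_Rminus (g h : R -> R) a b : ex_RInt g a b -> ex_RInt h a b ->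
  RInt (fun t => g t - h t) a b = RInt g a b - RInt h a b.
Proof. by move=> hg hh; rewrite (RInt_ext _ (fun t => minus (g t) (h t))) // RInt_minus. Qed.

Lemma RInt_affine (g : R -> R) al be ga x y : ex_RInt g x y ->
  RInt (fun t => al + be * (g t - ga)) x y = (y - x) * al + be * (RInt g x y - (y - x) * ga).
Proof.
move=> hg; have hc := ex_RInt_const x y ga.
have hd : ex_RInt (fun t => minus (g t) ga) x y by apply: ex_RInt_minus.
rewrite (RInt_ext _ (fun t => plus al (scal be (minus (g t) ga)))) //.
rewrite RInt_plus ?RInt_scal ?RInt_minus ?RInt_const //; [exact: ex_RInt_const|exact: ex_RInt_scal].
Qed.

Lemma RInt_eq0 (g : R -> R) a b : a <= b -> (forall s, a < s < b -> g s = 0) ->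
  RInt g a b = 0.
Proof.
move=> hab hg; rewrite (RInt_ext _ (fun _ => 0)).
  by rewrite RInt_const /scal /= /mult /=; ring.
by rewrite Rmin_left // Rmax_right.
Qed.

Lemma ex_RInt_ext_continuous (g gk : R -> R) x y : x <= y ->
  (forall s, x < s < y -> g s = gk s) -> (forall s, x <= s <= y -> continuous gk s) ->
  ex_RInt g x y.
Proof.
move=> hxy Eg Cg; apply: (ex_RInt_ext gk).
  by rewrite Rmin_left // Rmax_right // => s hs; rewrite Eg.
by apply: ex_RInt_continuous; rewrite Rmin_left // Rmax_right //.
Qed.

Lemma ex_RInt_piecewise3 (g g1 g2 g3 : R -> R) c1 c2 p q : p <= q -> c1 <= c2 ->
  (forall s, p < s < q -> s < c1 -> g s = g1 s) ->
  (forall s, p < s < q -> c1 < s < c2 -> g s = g2 s) ->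
  (forall s, p < s < q -> c2 < s -> g s = g3 s) ->
  (forall s, p <= s <= q -> continuous g1 s /\ continuous g2 s /\ continuous g3 s) ->
  ex_RInt g p q.
Proof.
move=> hpq hc E1 E2 E3 C.
pose m1 := Rmax p (Rmin q c1); pose m2 := Rmax p (Rmin q c2).
have [h1 [h2 [h3 [F1 [F2 F3]]]]] : p <= m1 /\ m1 <= m2 /\ m2 <= q /\
    (forall s, p < s < m1 -> s < c1) /\ (forall s, m1 < s < m2 -> c1 < s < c2) /\
    (forall s, m2 < s < q -> c2 < s).
  rewrite /m1 /m2 /Rmax /Rmin.
  case: (Rle_dec q c1) => ?; case: (Rle_dec q c2) => ?;
  repeat match goal with |- context [Rle_dec ?a ?b] => destruct (Rle_dec a b) end;
  repeat split; intros; lra.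
apply: (ex_RInt_Chasles _ p m1 q); last apply: (ex_RInt_Chasles _ m1 m2 q).
- apply: (ex_RInt_ext_continuous _ g1) => // [s hs|s hs]; last by apply C; lra.
  by apply: E1; [lra|apply: F1; lra].
- apply: (ex_RInt_ext_continuous _ g2) => // [s hs|s hs]; last by apply C; lra.
  by apply: E2; [lra|apply: F2; lra].
- apply: (ex_RInt_ext_continuous _ g3) => // [s hs|s hs]; last by apply C; lra.
  by apply: E3; [lra|apply: F3; lra].
Qed.

Lemma cont_on_square_comp (Phi : R -> R -> R) (g h : R -> R) s :
  cont_on_square Phi -> continuous g s -> continuous h s ->
  0 <= g s <= 1 -> 0 <= h s <= 1 -> continuous (fun t => Phi (g t) (h t)) s.
Proof. by move=> CP Cg Ch hg hh; apply: continuous_comp_2 => //; apply: CP. Qed.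

Lemma cont_on_square_fst : cont_on_square (fun u v => u).
Proof. by move=> u v _ _; apply: continuous_fst. Qed.

Lemma cont_on_square_snd : cont_on_square (fun u v => v).
Proof. by move=> u v _ _; apply: continuous_snd. Qed.

Lemma cont_on_square_const (c : R) : cont_on_square (fun _ _ => c).
Proof. by move=> u v _ _; apply: continuous_const. Qed.

Lemma cont_on_square_plus F G : cont_on_square F -> cont_on_square G ->
  cont_on_square (fun u v => F u v + G u v).
Proof.
by move=> CF CG u v hu hv; apply: (continuous_plus (fun z : R * R => F z.1 z.2));
  [apply: CF|apply: CG].
Qed.

Lemma cont_on_square_minus F G : cont_on_square F -> cont_on_square G ->
  cont_on_square (fun u v => F u v - G u v).
Proof.
by move=> CF CG u v hu hv; apply: (continuous_minus (fun z : R * R => F z.1 z.2));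
  [apply: CF|apply: CG].
Qed.

Lemma cont_on_square_mult F G : cont_on_square F -> cont_on_square G ->
  cont_on_square (fun u v => F u v * G u v).
Proof.
by move=> CF CG u v hu hv; apply: (continuous_mult (fun z : R * R => F z.1 z.2));
  [apply: CF|apply: CG].
Qed.

Lemma cont_on_square_fix_l (F : R -> R -> R) c : 0 <= c <= 1 -> cont_on_square F ->
  cont_on_square (fun u v => F c v).
Proof.
move=> hc CF u v hu hv.
apply: (continuous_comp_2 (fun _ : R * R => c) (fun z : R * R => z.2) F).
- exact: continuous_const.
- exact: continuous_snd.
- exact: CF.
Qed.

Definition astar (l1 s : R) : R := if Rlt_dec s l1 then Pk 0 s else 0.
Definition bstar (l1 l2 s : R) : R :=
  if Rlt_dec s l2 then Pk 1 s else if Rlt_dec s l1 then Pk 0 s else 0.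

Definition acum (l1 t : R) : R := RInt (astar l1) 0 t.
Definition bcum (l1 l2 t : R) : R := RInt (bstar l1 l2) 0 t.

Lemma astar_bounds l1 s : 0 <= s -> 0 <= astar l1 s <= 1.
Proof. by move=> hs; rewrite /astar; case: Rlt_dec => ? /=; [apply: Pk0_bounds|lra]. Qed.

Lemma bstar_bounds l1 l2 s : 0 <= s -> 0 <= bstar l1 l2 s <= 1.
Proof.
move=> hs; rewrite /bstar; case: Rlt_dec => ? /=; first exact: Pk1_bounds.
by case: Rlt_dec => ? /=; [apply: Pk0_bounds|lra].
Qed.

Lemma astar_antitone l1 s t : 0 <= s -> s <= t -> astar l1 t <= astar l1 s.
Proof.
move=> hs h; have := Pk0_bounds s hs; have := Pk0_antitone s t h => h1 h2.
by rewrite /astar; case: (Rlt_dec t l1) => ht /=; case: (Rlt_dec s l1) => hs' /=; lra.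
Qed.

Lemma bstar_antitone l1 l2 s t : 0 <= s -> s <= t -> bstar l1 l2 t <= bstar l1 l2 s.
Proof.
move=> hs h; rewrite /bstar.
have := Pk0_bounds s hs; have := Pk0_bounds t ltac:(lra); have := Pk1_bounds t ltac:(lra).
have := Pk0_le_Pk1 s hs; have := Pk0_antitone s t h; have := Pk1_antitone s t hs h.
move=> *.
case: (Rlt_dec t l2) => ht2 /=; case: (Rlt_dec s l2) => hs2 /=; try lra;
case: (Rlt_dec t l1) => ht1 /=; case: (Rlt_dec s l1) => hs1 /=; lra.
Qed.

Lemma ex_RInt_profile (Phi : R -> R -> R) l1 l2 p q :
  0 <= p -> p <= q -> cont_on_square Phi ->
  ex_RInt (fun t => Phi (astar l1 t) (bstar l1 l2 t)) p q.
Proof.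
move=> hp hpq CP.
have C0 := continuous_const (0 : R); have B0 : 0 <= (0 : R) <= 1 by lra.
rewrite /astar /bstar; case: (Rle_lt_dec l1 l2) => hl.
- apply: (ex_RInt_piecewise3 _ (fun t => Phi (Pk 0 t) (Pk 1 t)) (fun t => Phi 0 (Pk 1 t))
    (fun t => Phi 0 0) l1 l2) => // [s _ hs|s _ hs|s _ hs|s hs].
  1-3: by repeat (case: Rlt_dec => ? /=; try lra).
  have hs0 : 0 <= s by lra.
  by repeat split; apply: cont_on_square_comp => //;
    try apply: continuous_Pk0; try apply: continuous_Pk1;
    try apply: Pk0_bounds; try apply: Pk1_bounds.
- apply: (ex_RInt_piecewise3 _ (fun t => Phi (Pk 0 t) (Pk 1 t)) (fun t => Phi (Pk 0 t) (Pk 0 t))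
    (fun t => Phi 0 0) l2 l1) => // [|s _ hs|s _ hs|s _ hs|s hs]; first lra.
  1-3: by repeat (case: Rlt_dec => ? /=; try lra).
  have hs0 : 0 <= s by lra.
  by repeat split; apply: cont_on_square_comp => //;
    try apply: continuous_Pk0; try apply: continuous_Pk1;
    try apply: Pk0_bounds; try apply: Pk1_bounds.
Qed.

Lemma ex_RInt_astar l1 p q : 0 <= p -> p <= q -> ex_RInt (astar l1) p q.
Proof.
by move=> hp hq; apply: (ex_RInt_profile (fun u v => u) l1 0) => //; apply: cont_on_square_fst.
Qed.

Lemma ex_RInt_bstar l1 l2 p q : 0 <= p -> p <= q -> ex_RInt (bstar l1 l2) p q.
Proof.
by move=> hp hq; apply: (ex_RInt_profile (fun u v => v)) => //; apply: cont_on_square_snd.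
Qed.

Lemma RInt_astar l1 p q : 0 <= p -> p <= q -> RInt (astar l1) p q = acum l1 q - acum l1 p.
Proof.
move=> hp hq; have ? := ex_RInt_astar l1 0 p ltac:(lra) hp; have ? := ex_RInt_astar l1 p q hp hq.
by rewrite /acum -(RInt_Chasles _ 0 p q) // /plus /=; lra.
Qed.

Lemma RInt_bstar l1 l2 p q : 0 <= p -> p <= q ->
  RInt (bstar l1 l2) p q = bcum l1 l2 q - bcum l1 l2 p.
Proof.
move=> hp hq; have ? := ex_RInt_bstar l1 l2 0 p ltac:(lra) hp.
have ? := ex_RInt_bstar l1 l2 p q hp hq.
by rewrite /bcum -(RInt_Chasles _ 0 p q) // /plus /=; lra.
Qed.

Lemma acum_below l1 t : 0 <= t -> t <= l1 -> acum l1 t = 1 - Pk 0 t.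
Proof.
move=> ht htl; rewrite /acum (RInt_ext _ (Pk 0)); first by rewrite RInt_Pk0 Pk0E Ropp_0 exp_0.
by rewrite Rmin_left // Rmax_right // => s hs; rewrite /astar; case: Rlt_dec => ? /=; lra.
Qed.

Lemma acum_above l1 t : 0 <= l1 -> l1 <= t -> acum l1 t = 1 - Pk 0 l1.
Proof.
move=> l1_ge0 ht; have -> : acum l1 t = acum l1 l1 + RInt (astar l1) l1 t.
  by rewrite RInt_astar //; lra.
rewrite (RInt_eq0 _ l1 t) // => [|s hs]; first by rewrite acum_below; lra.
by rewrite /astar; case: Rlt_dec => ? /=; lra.
Qed.

Lemma bcum_below l1 l2 t : 0 <= t -> t <= l2 -> bcum l1 l2 t = tail2 t.
Proof.
move=> ht htl; rewrite /bcum (RInt_ext _ (Pk 1)).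
  by rewrite RInt_Pk1 /tail2 Pk0E Pk1E Ropp_0 exp_0; lra.
by rewrite Rmin_left // Rmax_right // => s hs; rewrite /bstar; case: Rlt_dec => ? /=; lra.
Qed.

Lemma bcum_above l1 l2 t : 0 <= l2 -> l1 <= l2 -> l2 <= t -> bcum l1 l2 t = tail2 l2.
Proof.
move=> l2_ge0 hl ht; have -> : bcum l1 l2 t = bcum l1 l2 l2 + RInt (bstar l1 l2) l2 t.
  by rewrite RInt_bstar //; lra.
rewrite (RInt_eq0 _ l2 t) // => [|s hs]; first by rewrite bcum_below; lra.
by rewrite /bstar; do 2 (case: Rlt_dec => ? /=; try lra).
Qed.

Lemma bcum_between l1 l2 t : 0 <= l2 -> l2 < l1 -> l2 <= t -> t <= l1 ->
  bcum l1 l2 t = tail2 l2 + (Pk 0 l2 - Pk 0 t).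
Proof.
move=> l2_ge0 hl ht ht1; have -> : bcum l1 l2 t = bcum l1 l2 l2 + RInt (bstar l1 l2) l2 t.
  by rewrite RInt_bstar //; lra.
rewrite bcum_below ?(RInt_ext _ (Pk 0) l2 t) ?RInt_Pk0 //; try lra.
rewrite Rmin_left // Rmax_right // => s hs.
by rewrite /bstar; do 2 (case: Rlt_dec => ? /=; try lra).
Qed.

Lemma bcum_above_l1 l1 l2 t : 0 <= l2 -> l2 < l1 -> l1 <= t ->
  bcum l1 l2 t = tail2 l2 + (Pk 0 l2 - Pk 0 l1).
Proof.
move=> l2_ge0 hl ht; have -> : bcum l1 l2 t = bcum l1 l2 l1 + RInt (bstar l1 l2) l1 t.
  by rewrite RInt_bstar //; lra.
rewrite (RInt_eq0 _ l1 t) // => [|s hs]; first by rewrite bcum_between; lra.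
by rewrite /bstar; do 2 (case: Rlt_dec => ? /=; try lra).
Qed.

HB.instance Definition _ := Monoid.isComLaw.Build R 0 Rplus
  (fun a b c => esym (Rplus_assoc a b c)) Rplus_comm Rplus_0_l.

Section InsertionSort.
Variables (T : eqType) (key : T -> R).

Fixpoint insert_by (i : T) (s : seq T) : seq T :=
  if s is j :: s' then
    if Rle_dec (key i) (key j) then i :: s else j :: insert_by i s'
  else [:: i].

Definition sort_by (s : seq T) : seq T := foldr insert_by [::] s.

Fixpoint sorted_by (s : seq T) : Prop :=
  if s is i :: s' then (forall j, j \in s' -> key i <= key j) /\ sorted_by s' else True.

Lemma perm_insert_by i s : perm_eq (insert_by i s) (i :: s).
Proof.
elim: s => [|j s IH] //=; case: Rle_dec => _ //=.
apply: (@perm_trans _ (j :: i :: s)); first by rewrite perm_cons.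
by apply/permP => a /=; rewrite addnCA.
Qed.

Lemma perm_sort_by s : perm_eq (sort_by s) s.
Proof.
by elim: s => [|i s IH] //=; apply: perm_trans (perm_insert_by i _) _; rewrite perm_cons.
Qed.

Lemma sorted_insert_by i s : sorted_by s -> sorted_by (insert_by i s).
Proof.
elim: s => [|j s IH] /= => [|[Hj Hs]]; first by split.
case: Rle_dec => h /=; split => //.
- by move=> k; rewrite inE => /orP [/eqP ->|/Hj]; lra.
- by move=> k; rewrite (perm_mem (perm_insert_by i s)) inE => /orP [/eqP ->|/Hj]; lra.
- exact: IH.
Qed.

Lemma sorted_sort_by s : sorted_by (sort_by s).
Proof. by elim: s => [|i s IH] //=; apply: sorted_insert_by. Qed.

End InsertionSort.
Arguments insert_by {T} key i s.
Arguments sort_by {T} key s.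
Arguments sorted_by {T} key s.

Definition lsum {T : Type} (F : T -> R) (s : seq T) : R := \big[Rplus/0]_(i <- s) F i.

Lemma lsum_nil {T : Type} (F : T -> R) : lsum F [::] = 0.
Proof. by rewrite /lsum big_nil. Qed.

Lemma lsum_cons {T : Type} (F : T -> R) i s : lsum F (i :: s) = F i + lsum F s.
Proof. by rewrite /lsum big_cons. Qed.

Lemma lsum_ge0 {T : Type} (F : T -> R) s : (forall i, 0 <= F i) -> 0 <= lsum F s.
Proof. by move=> H; elim: s => [|i s IH]; rewrite ?lsum_nil ?lsum_cons; [lra|have := H i; lra]. Qed.

Lemma lsum_uniq (T : finType) (F : T -> R) (s : seq T) :
  uniq s -> lsum F s = rsum (mem [set i | i \in s]) F.
Proof. by move=> us; rewrite /lsum /rsum big_uniq //; apply: eq_bigl => i; rewrite !inE. Qed.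

Lemma lsum_perm_enum (T : finType) (F : T -> R) (s : seq T) :
  perm_eq s (enum T) -> lsum F s = rsum predT F.
Proof. by move=> ps; rewrite /lsum /rsum (perm_big _ ps) /= big_enum. Qed.

Lemma rsum_ge0 (T : finType) (A : pred T) (F : T -> R) :
  (forall i, 0 <= F i) -> 0 <= rsum A F.
Proof. by move=> H; apply: (big_ind (fun x => 0 <= x)) => //; [lra|move=> *; lra]. Qed.

Lemma rsum_subset_le (T : finType) (S : {set T}) (F : T -> R) :
  (forall i, 0 <= F i) -> rsum (mem S) F <= rsum predT F.
Proof.
move=> H; rewrite /rsum [X in _ <= X](bigID (mem S)) /= -[X in X <= _]Rplus_0_r.
apply: Rplus_le_compat; first by apply: Req_le; apply: eq_bigl.
exact: (rsum_ge0 _ (predC (mem S))).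
Qed.

Lemma rsum_setT (T : finType) (F : T -> R) : rsum (mem [set: T]) F = rsum predT F.
Proof. by apply: eq_bigl => i; rewrite !inE. Qed.

Section LaidOutSums.
Variables (T : eqType) (lam : T -> R).
Hypothesis lam_ge0 : forall i, 0 <= lam i.

Fixpoint psum (g : T -> R -> R) (p : R) (s : seq T) : R :=
  if s is i :: s' then g i p + psum g (p + lam i) s' else 0.

Lemma psum_const (F : T -> R) p s : psum (fun i _ => F i) p s = lsum F s.
Proof. by elim: s p => [|i s IH] p /=; rewrite ?lsum_nil ?lsum_cons ?IH. Qed.

Lemma psum_minus g h p s :
  psum (fun i p => g i p - h i p) p s = psum g p s - psum h p s.
Proof. by elim: s p => [|i s IH] p /=; rewrite ?IH; ring. Qed.

Lemma psum_le g h p s : (forall i q, p <= q -> g i q <= h i q) -> psum g p s <= psum h p s.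
Proof.
elim: s p => [|i s IH] p H /=; first lra.
have := H i p (Rle_refl _); have := IH (p + lam i) => IH'.
have := IH' (fun j q hq => H j q ltac:(have := lam_ge0 i; lra)); lra.
Qed.

Lemma psum_RInt (G : R -> R) p s :
  (forall x y, p <= x -> x <= y -> ex_RInt G x y) ->
  psum (fun i p => RInt G p (p + lam i)) p s = RInt G p (p + lsum lam s).
Proof.
elim: s p => [|i s IH] p H /=; first by rewrite lsum_nil Rplus_0_r RInt_point.
have hi := lam_ge0 i; have hs : 0 <= lsum lam s by apply: lsum_ge0.
rewrite IH => [|x y hx hy]; last by apply: H; lra.
rewrite lsum_cons -Rplus_assoc.
by have := RInt_Chasles G p (p + lam i) (p + lam i + lsum lam s); rewrite /plus /= => -> //;
  apply: H; lra.
Qed.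

(* Along [s], the deficits
   [D_k = acc + (c-mass of the first k items) - C (their right end)] are
   nonpositive and the last one vanishes; if each term [X i] dominates the
   increment of [h i * D], the sum telescopes because [h] increases along the
   sorted list and [D <= 0]. *)
Lemma psum_abel_ge (key : T -> R) (c : T -> R) (C : R -> R) (h X : T -> R -> R) :
  (forall i j, key i <= key j -> forall t, 0 <= t -> h i t <= h j t) ->
  (forall i p acc, 0 <= p -> acc - C p <= 0 -> acc + c i - C (p + lam i) <= 0 ->
      X i p >= h i (p + lam i) * (acc + c i - C (p + lam i)) - h i p * (acc - C p)) ->
  forall s p acc H, 0 <= p -> sorted_by key s -> (forall i, i \in s -> H <= h i p) ->
   (forall k, acc + lsum c (take k s) <= C (p + lsum lam (take k s))) ->
   acc + lsum c s = C (p + lsum lam s) ->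
   psum X p s >= - H * (acc - C p).
Proof.
move=> Hh HX; elim=> [|i s IH] p acc H hp /= Hs HH Hk Hf.
  by move: Hf; rewrite !lsum_nil !Rplus_0_r => ->; lra.
have hl := lam_ge0 i.
have h0 : acc - C p <= 0 by have := Hk O; rewrite /= !lsum_nil !Rplus_0_r; lra.
have h1 : acc + c i - C (p + lam i) <= 0.
  by have := Hk 1%nat; rewrite /= take0 !lsum_cons !lsum_nil !Rplus_0_r; lra.
case: Hs => Hs1 Hs2.
have IH' : psum X (p + lam i) s >= - h i (p + lam i) * (acc + c i - C (p + lam i)).
  apply: IH => // [|j hj|k|]; first lra.
  - by apply: Hh; [apply: Hs1|lra].
  - by have := Hk k.+1; rewrite /= !lsum_cons -!Rplus_assoc.
  - by move: Hf; rewrite !lsum_cons -!Rplus_assoc.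
have := HX i p acc hp h0 h1; have := HH i (mem_head _ _); nra.
Qed.

Lemma psum_abel_ge0 (key : T -> R) (c : T -> R) (C : R -> R) (h X : T -> R -> R) s :
  (forall i j, key i <= key j -> forall t, 0 <= t -> h i t <= h j t) ->
  (forall i p acc, 0 <= p -> acc - C p <= 0 -> acc + c i - C (p + lam i) <= 0 ->
      X i p >= h i (p + lam i) * (acc + c i - C (p + lam i)) - h i p * (acc - C p)) ->
  sorted_by key s -> C 0 = 0 ->
  (forall k, lsum c (take k s) <= C (lsum lam (take k s))) ->
  lsum c s = C (lsum lam s) ->
  0 <= psum X 0 s.
Proof.
move=> Hh HX Hs C0 Hk Hf.
have [H HH] : exists H, forall i, i \in s -> H <= h i 0.
  case: s Hs {Hk Hf} => [|i0 s] /= => [_|[Hs _]]; first by exists 0.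
  exists (h i0 0) => i; rewrite inE => /orP [/eqP ->|hi]; first lra.
  by apply: Hh; [apply: Hs|lra].
have : psum X 0 s >= - H * (0 - C 0).
  apply: (psum_abel_ge key c C h X Hh HX s 0 0 H (Rle_refl 0) Hs HH).
  - by move=> k; rewrite !Rplus_0_l.
  - by rewrite !Rplus_0_l.
rewrite C0; lra.
Qed.

End LaidOutSums.
Arguments psum {T} lam g p s.

Lemma RInt_split_const_mul (h D : R -> R) x y :
  ex_RInt D x y -> ex_RInt (fun t => h t * D t) x y ->
  ex_RInt (fun t => (h t - h x) * D t) x y /\
  RInt (fun t => h t * D t) x y = h x * RInt D x y + RInt (fun t => (h t - h x) * D t) x y.
Proof.
move=> hD hhD.
have E t : (h t - h x) * D t = minus (h t * D t) (scal (h x) (D t)).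
  by rewrite /minus /plus /opp /scal /= /mult /=; ring.
have ex1 : ex_RInt (fun t => minus (h t * D t) (scal (h x) (D t))) x y.
  by apply: ex_RInt_minus => //; apply: ex_RInt_scal.
split.
  by apply: (ex_RInt_ext (fun t => minus (h t * D t) (scal (h x) (D t)))) => // t _; rewrite E.
rewrite (RInt_ext (fun t => (h t - h x) * D t) (fun t => minus (h t * D t) (scal (h x) (D t))));
  last by move=> t _; rewrite E.
rewrite RInt_minus //; last exact: ex_RInt_scal.
by rewrite RInt_scal // /minus /plus /opp /scal /= /mult /=; lra.
Qed.

Lemma RInt_mul_monotone_step (h D : R -> R) x y Phix M :
  x <= y ->
  (forall s t, x <= s -> s <= t -> t <= y -> h s <= h t) ->
  (forall t, x <= t <= y -> Rabs (D t) <= M) ->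
  ex_RInt D x y -> ex_RInt (fun t => h t * D t) x y ->
  Phix + RInt D x y <= 0 ->
  RInt (fun t => h t * D t) x y >=
    h y * (Phix + RInt D x y) - h x * Phix - (h y - h x) * M * (y - x).
Proof.
move=> hxy Hm HM hD hhD hPhi.
have [exr ->] := RInt_split_const_mul h D x y hD hhD.
have hxy' := Hm x y (Rle_refl x) hxy (Rle_refl y).
have Err : Rabs (RInt (fun t => (h t - h x) * D t) x y) <= (y - x) * ((h y - h x) * M).
  apply: (norm_RInt_le_const (fun t => (h t - h x) * D t) x y) => // [t ht|].
    2: exact: RInt_correct.
  rewrite /norm /= /abs /= Rabs_mult Rabs_pos_eq; last by have := Hm x t; lra.
  apply: Rmult_le_compat; try apply: Rabs_pos; first by have := Hm x t; lra.
  - by apply: Rplus_le_compat_r; apply: Hm; lra.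
  - by apply: HM.
have [Err1 _] := proj1 (Rabs_le_between _ _) Err.
nra.
Qed.

Lemma RInt_mul_monotone_approx (h D : R -> R) p q Phip M (n : nat) :
  p <= q ->
  (forall s t, p <= s -> s <= t -> t <= q -> h s <= h t) ->
  (forall t, p <= t <= q -> Rabs (D t) <= M) ->
  (forall x y, p <= x -> x <= y -> y <= q -> ex_RInt D x y) ->
  (forall x y, p <= x -> x <= y -> y <= q -> ex_RInt (fun t => h t * D t) x y) ->
  (forall t, p <= t <= q -> Phip + RInt D p t <= 0) ->
  RInt (fun t => h t * D t) p q >=
    h q * (Phip + RInt D p q) - h p * Phip - (h q - h p) * M * ((q - p) / INR n.+1).
Proof.
move=> hpq Hm HM HD HhD HPhi.
pose S t := RInt (fun t => h t * D t) p t; pose Phi t := Phip + RInt D p t.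
pose dl := (q - p) / INR n.+1.
have N0 : 0 < INR n.+1 by apply: lt_0_INR; apply/ltP.
have Ndl : INR n.+1 * dl = q - p by rewrite /dl; field; lra.
have dl0 : 0 <= dl by apply: Rmult_le_pos; [lra|left; apply: Rinv_0_lt_compat].
have grid k : (k <= n.+1)%nat -> p <= p + INR k * dl <= q.
  move=> hk; have : INR k <= INR n.+1 by apply: le_INR; apply/leP.
  have := pos_INR k; nra.
suff claim k : (k <= n.+1)%nat -> S (p + INR k * dl) - h (p + INR k * dl) * Phi (p + INR k * dl)
    >= - h p * Phip - (h (p + INR k * dl) - h p) * M * dl.
  by have := claim n.+1 (leqnn _); rewrite Ndl Rplus_minus /S /Phi -/dl; lra.
elim: k => [|k IH] hk; first by rewrite /S /Phi Rmult_0_l Rplus_0_r !RInt_point /zero /=; lra.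
have hk1 : (k <= n.+1)%nat by apply: leq_trans hk.
have [hx1 hx2] := grid k hk1; have := grid k.+1 hk; rewrite S_INR.
have -> : p + (INR k + 1) * dl = p + INR k * dl + dl by ring.
move: (p + INR k * dl) (IH hk1) hx1 hx2 => x IH' hx1 hx2 [hy1 hy2].
have ex_hD : ex_RInt (fun t => h t * D t) x (x + dl) by apply: HhD; lra.
have ex_D : ex_RInt D x (x + dl) by apply: HD; lra.
have ES : S (x + dl) = S x + RInt (fun t => h t * D t) x (x + dl).
  by rewrite /S -(RInt_Chasles _ p x) //; apply: HhD; lra.
have EPhi : Phi (x + dl) = Phi x + RInt D x (x + dl).
  by rewrite /Phi -(RInt_Chasles _ p x) // /plus /=; [ring|apply: HD; lra].
have Hstep := RInt_mul_monotone_step h D x (x + dl) (Phi x) M ltac:(lra)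
  (fun s t hs hst ht => Hm s t ltac:(lra) hst ltac:(lra)) (fun t ht => HM t ltac:(lra))
  ex_D ex_hD ltac:(rewrite -EPhi; apply: HPhi; lra).
have := Hm p x ltac:(lra) hx1 hx2.
rewrite ES EPhi; rewrite (_ : x + dl - x = dl) in Hstep; last ring.
lra.
Qed.

Lemma Rge_of_approx A B K : 0 <= K -> (forall n : nat, A >= B - K / INR n.+1) -> A >= B.
Proof.
move=> K0 H; apply: Rnot_lt_ge => hlt.
have [n hn] := INR_archimed (B - A) K ltac:(lra).
have := H n; rewrite S_INR; have := pos_INR n => hn0.
have -> : K / (INR n + 1) = K * / (INR n + 1) by [].
have : K * / (INR n + 1) < B - A.
  apply: (Rmult_lt_reg_r (INR n + 1)); first lra.
  by rewrite Rmult_assoc Rinv_l; nra.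
lra.
Qed.

(* A second mean value inequality: for nondecreasing [h] and a primitive
   [Phi = Phip + int_p D] staying nonpositive,
   [int_p^q h D = [h Phi]_p^q - int Phi dh >= [h Phi]_p^q]. *)
Lemma RInt_mul_monotone_ge (h D : R -> R) p q Phip M :
  p <= q ->
  (forall s t, p <= s -> s <= t -> t <= q -> h s <= h t) ->
  (forall t, p <= t <= q -> Rabs (D t) <= M) ->
  (forall x y, p <= x -> x <= y -> y <= q -> ex_RInt D x y) ->
  (forall x y, p <= x -> x <= y -> y <= q -> ex_RInt (fun t => h t * D t) x y) ->
  (forall t, p <= t <= q -> Phip + RInt D p t <= 0) ->
  RInt (fun t => h t * D t) p q >= h q * (Phip + RInt D p q) - h p * Phip.
Proof.
move=> hpq Hm HM HD HhD HPhi.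
have M0 : 0 <= M by have := HM p ltac:(lra); have := Rabs_pos (D p); lra.
have hpq' := Hm p q (Rle_refl p) hpq (Rle_refl q).
apply: (Rge_of_approx _ _ ((h q - h p) * M * (q - p))) => [|n].
  by apply: Rmult_le_pos; [nra|lra].
rewrite (_ : _ / INR n.+1 = (h q - h p) * M * ((q - p) / INR n.+1)); last by rewrite /Rdiv; ring.
exact: RInt_mul_monotone_approx.
Qed.

Lemma RInt_nondecreasing_le0 (D : R -> R) p q Phip t :
  (forall s u, p <= s -> s <= u -> u <= q -> D s <= D u) ->
  (forall x y, p <= x -> x <= y -> y <= q -> ex_RInt D x y) ->
  Phip <= 0 -> Phip + RInt D p q <= 0 -> p <= t <= q -> Phip + RInt D p t <= 0.
Proof.
move=> Hm HD h0 h1 ht.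
have Cq : RInt D p q = RInt D p t + RInt D t q.
  by symmetry; apply: RInt_Chasles; apply: HD; lra.
have Lc a b : a <= b -> RInt (fun _ => D t) a b = (b - a) * D t.
  by move=> _; rewrite RInt_const /scal /= /mult /=.
case: (Rle_dec 0 (D t)) => hDt.
- have : RInt (fun _ => D t) t q <= RInt D t q.
    apply: RInt_le; try lra; [exact: ex_RInt_const|apply: HD; lra|].
    by move=> s hs; apply: Hm; lra.
  rewrite Lc; last lra; have : 0 <= (q - t) * D t by apply: Rmult_le_pos; lra.
  lra.
- have : RInt D p t <= RInt (fun _ => D t) p t.
    apply: RInt_le; try lra; [apply: HD; lra|exact: ex_RInt_const|].
    by move=> s hs; apply: Hm; lra.
  rewrite Lc; last lra; have : (t - p) * D t <= 0 by nra.
  lra.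
Qed.

Lemma RInt_shift_le (g : R -> R) p a b :
  0 <= a -> 0 <= b ->
  (forall x y, p <= x -> x <= y -> g x <= g y) ->
  (forall x y, p <= x -> x <= y -> ex_RInt g x y) ->
  RInt g p (p + a) <= RInt g (p + b) (p + b + a).
Proof.
move=> ha hb Hm Hi.
have ex : ex_RInt g (1 * p + b) (1 * (p + a) + b) by apply: Hi; lra.
rewrite (_ : p + b = 1 * p + b); last ring.
rewrite (_ : 1 * p + b + a = 1 * (p + a) + b); last ring.
rewrite -(RInt_comp_lin g 1 b p (p + a) ex).
apply: RInt_le => [||//|t ht]; first lra.
- by apply: Hi; lra.
- exact: ex_RInt_comp_lin.
- by rewrite /scal /= /mult /= Rmult_1_l; apply: Hm; lra.
Qed.

Section Exchange.
Variables (T : eqType) (lam : T -> R) (key : T -> R) (phi : T -> R -> R).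
Hypothesis lam_ge0 : forall i, 0 <= lam i.
Hypothesis phi_int : forall i x y, 0 <= x -> x <= y -> ex_RInt (phi i) x y.
Hypothesis phi_increment : forall i j, key j <= key i ->
  forall x y, 0 <= x -> x <= y -> phi j x - phi i x <= phi j y - phi i y.

Definition pint (p : R) (s : seq T) : R :=
  psum lam (fun i p => RInt (phi i) p (p + lam i)) p s.

Lemma RInt_swap_adjacent i j p : key j <= key i -> 0 <= p ->
  RInt (phi j) p (p + lam j) + RInt (phi i) (p + lam j) (p + lam j + lam i) <=
  RInt (phi i) p (p + lam i) + RInt (phi j) (p + lam i) (p + lam i + lam j).
Proof.
move=> hk hp; have hi := lam_ge0 i; have hj := lam_ge0 j.
have ex x y : p <= x -> x <= y -> forall k, ex_RInt (phi k) x y.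
  by move=> hx hy k; apply: phi_int; lra.
have exd x y : p <= x -> x <= y -> ex_RInt (fun t => phi j t - phi i t) x y.
  by move=> hx hy; apply: ex_RInt_Rminus; apply: ex.
have := RInt_shift_le (fun t => phi j t - phi i t) p (lam i) (lam j) hi hj
  (fun x y hx hy => phi_increment i j hk x y ltac:(lra) hy) exd.
rewrite !RInt_Rminus; try (apply: ex; lra).
rewrite (_ : p + lam j + lam i = p + lam i + lam j); last ring.
have C k a : p <= a -> a <= p + lam i + lam j ->
    RInt (phi k) p (p + lam i + lam j) = RInt (phi k) p a + RInt (phi k) a (p + lam i + lam j).
  by move=> ha hb; symmetry; apply: RInt_Chasles; apply: ex; lra.
have := C i (p + lam i); have := C i (p + lam j); have := C j (p + lam i); have := C j (p + lam j).
lra.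
Qed.

Lemma pint_insert_by i s p : 0 <= p -> pint p (insert_by key i s) <= pint p (i :: s).
Proof.
rewrite /pint; elim: s p => [|j s IH] p hp /=; first lra.
case: Rle_dec => h /=; first lra.
have hj := lam_ge0 j; have hi := lam_ge0 i.
have := IH (p + lam j) ltac:(lra) => /=.
have := RInt_swap_adjacent i j p ltac:(lra) hp.
rewrite (_ : p + lam j + lam i = p + lam i + lam j); last ring.
lra.
Qed.

Lemma pint_sort_by s p : 0 <= p -> pint p (sort_by key s) <= pint p s.
Proof.
elim: s p => [|i s IH] p hp /=; first lra.
have := pint_insert_by i (sort_by key s) p hp; rewrite /pint /=.
have := IH (p + lam i) ltac:(have := lam_ge0 i; lra); rewrite /pint /=; lra.
Qed.

End Exchange.
Arguments pint {T} lam phi p s.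

Section PoissonMatchingInstance.
Variables (I J : finType) (lam : I -> R) (E : I -> J -> bool) (x : I -> J -> R)
  (f : R -> R -> R) (j1 j2 : J) (l1 l2 : R).
Hypotheses (lam_gt0 : forall i, 0 < lam i) (x_PM2 : in_PM2 lam E x)
  (f_DR : DR_submodular f) (j1_neq_j2 : j1 <> j2) (l1_ge0 : 0 <= l1) (l2_ge0 : 0 <= l2).
Hypothesis x_j1_total : rsum predT (fun i => x i j1) = 1 - Pk 0 l1.
Hypothesis x_j2_total : rsum predT (fun i => x i j2) = tail2 l2 - (1 - Pk 0 (Rmin l1 l2)).

Let lam_ge0 i : 0 <= lam i := Rlt_le _ _ (lam_gt0 i).

Lemma x_ge0 i j : 0 <= x i j.
Proof. by case: x_PM2. Qed.

Lemma x_j1_j2_le i : x i j1 + x i j2 <= lam i.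
Proof.
case: x_PM2 => _ [_ [H _]]; apply: Rle_trans (H i).
rewrite /rsum (bigD1 j1) // (bigD1 j2) /=; last by apply/eqP => e; apply: j1_neq_j2.
have : 0 <= \big[Rplus/0]_(j | (j != j1) && (j != j2)) x i j.
  by apply: (big_ind (fun s => 0 <= s)) => [|? ? ? ?|? _]; [lra|lra|apply: x_ge0].
lra.
Qed.

Definition rho1 i := x i j1 / lam i.
Definition rho12 i := x i j1 / lam i + x i j2 / lam i.

Lemma x_j1E i : x i j1 = lam i * rho1 i.
Proof. by rewrite /rho1; field; have := lam_gt0 i; lra. Qed.

Lemma x_j12E i : x i j1 + x i j2 = lam i * rho12 i.
Proof. by rewrite /rho12; field; have := lam_gt0 i; lra. Qed.

Lemma frac_bounds i c : 0 <= c <= lam i -> 0 <= c / lam i <= 1.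
Proof.
move=> hc; have hl := lam_gt0 i; split; first by apply: Rdiv_le_0_compat; lra.
by apply: (Rmult_le_reg_r (lam i)) => //; rewrite /Rdiv Rmult_assoc Rinv_l; lra.
Qed.

Lemma rho1_bounds i : 0 <= rho1 i <= 1.
Proof.
by apply: frac_bounds; have := x_j1_j2_le i; have := x_ge0 i j2; have := x_ge0 i j1; lra.
Qed.

Lemma rho12_bounds i : 0 <= rho12 i <= 1.
Proof.
rewrite (_ : rho12 i = (x i j1 + x i j2) / lam i).
  2: by rewrite /rho12; field; have := lam_gt0 i; lra.
by apply: frac_bounds; have := x_j1_j2_le i; have := x_ge0 i j2; have := x_ge0 i j1; lra.
Qed.

Definition Lam := rsum predT lam.

Lemma lamS_ge0 (S : {set I}) : 0 <= lamS lam S.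
Proof. exact: rsum_ge0. Qed.

Lemma l1_le_Lam : l1 <= Lam.
Proof.
case: x_PM2 => _ [_ [_ [H _]]]; apply: Pk0_le_inv.
by have := H setT j1; rewrite /Lam rsum_setT x_j1_total /lamS rsum_setT; lra.
Qed.

Lemma x_j12_total : rsum predT (fun i => x i j1 + x i j2) =
  1 - Pk 0 l1 + (tail2 l2 - (1 - Pk 0 (Rmin l1 l2))).
Proof. by rewrite /rsum big_split -!/(rsum _ _) x_j1_total x_j2_total. Qed.

Lemma l2_le_Lam : l2 <= Lam.
Proof.
case: (Rle_dec l1 l2) => h; last by have := l1_le_Lam; lra.
case: x_PM2 => _ [_ [_ [_ H]]]; rewrite /Lam -rsum_setT; apply: tail2_le_inv.
  exact: lamS_ge0.
have := H setT j1 j2 j1_neq_j2; rewrite rsum_setT x_j12_total Rmin_left //.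
by rewrite /tail2 /lamS; lra.
Qed.

Lemma x_j1_set_le (S : {set I}) : rsum (mem S) (fun i => x i j1) <= acum l1 (lamS lam S).
Proof.
case: x_PM2 => _ [_ [_ [H _]]].
case: (Rle_dec (lamS lam S) l1) => h.
  by rewrite acum_below //; apply: lamS_ge0.
rewrite acum_above // -?x_j1_total; last lra.
by apply: rsum_subset_le => i; apply: x_ge0.
Qed.

Lemma x_j12_set_le (S : {set I}) :
  rsum (mem S) (fun i => x i j1 + x i j2) <= bcum l1 l2 (lamS lam S).
Proof.
case: x_PM2 => _ [_ [_ [H1 H2]]]; have h0 := lamS_ge0 S.
have Hsub : rsum (mem S) (fun i => x i j1 + x i j2) <= rsum predT (fun i => x i j1 + x i j2).
  by apply: rsum_subset_le => i; have := x_ge0 i j1; have := x_ge0 i j2; lra.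
rewrite x_j12_total in Hsub; have C2 := H2 S j1 j2 j1_neq_j2.
case: (Rle_dec (lamS lam S) l2) => h; first by rewrite bcum_below // /tail2; lra.
case: (Rle_dec l1 l2) => hl; first by rewrite bcum_above ?Rmin_left in Hsub *; lra.
rewrite Rmin_right in Hsub; last lra.
case: (Rle_dec (lamS lam S) l1) => h'; last by rewrite bcum_above_l1; lra.
have : rsum (mem S) (fun i => x i j2) <= rsum predT (fun i => x i j2).
  by apply: rsum_subset_le => i; apply: x_ge0.
have := H1 S j1; rewrite x_j2_total Rmin_right; last lra.
by rewrite bcum_between /rsum ?big_split /= -?/(rsum _ _) /tail2; lra.
Qed.

Lemma acum_Lam : acum l1 Lam = rsum predT (fun i => x i j1).
Proof. by rewrite acum_above ?x_j1_total //; apply: l1_le_Lam. Qed.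

Lemma bcum_Lam : bcum l1 l2 Lam = rsum predT (fun i => x i j1 + x i j2).
Proof.
have := l1_le_Lam; have := l2_le_Lam; rewrite x_j12_total.
case: (Rle_dec l1 l2) => hl *; first by rewrite bcum_above ?Rmin_left //; lra.
by rewrite bcum_above_l1 ?Rmin_right; lra.
Qed.

Lemma x_j1_prefix_le (r : seq I) : uniq r -> lsum (fun i => x i j1) r <= acum l1 (lsum lam r).
Proof. by move=> ur; rewrite !lsum_uniq //; apply: x_j1_set_le. Qed.

Lemma x_j12_prefix_le (r : seq I) :
  uniq r -> lsum (fun i => x i j1 + x i j2) r <= bcum l1 l2 (lsum lam r).
Proof. by move=> ur; rewrite !lsum_uniq //; apply: x_j12_set_le. Qed.

Definition phi i t := f (rho1 i) (bstar l1 l2 t).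
Definition psi t := f (astar l1 t) (bstar l1 l2 t).

Lemma ex_RInt_phi i p q : 0 <= p -> p <= q -> ex_RInt (phi i) p q.
Proof.
move=> hp hq; apply: (ex_RInt_profile (fun u v => f (rho1 i) v)) => //.
by apply: cont_on_square_fix_l; [apply: rho1_bounds|apply: DR_continuous].
Qed.

Lemma ex_RInt_psi p q : 0 <= p -> p <= q -> ex_RInt psi p q.
Proof. by move=> hp hq; apply: ex_RInt_profile => //; apply: DR_continuous. Qed.

Definition lhs := rsum predT (fun i => lam i * f (rho1 i) (rho12 i)).

Lemma RInt_phi_tangent_r i q : 0 <= q ->
  d2 f (rho1 i) (rho12 i) * ((x i j1 + x i j2) - (bcum l1 l2 (q + lam i) - bcum l1 l2 q))
    <= lam i * f (rho1 i) (rho12 i) - RInt (phi i) q (q + lam i).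
Proof.
move=> hq; have hl := lam_ge0 i.
have : RInt (phi i) q (q + lam i) <=
    RInt (fun t => f (rho1 i) (rho12 i) + d2 f (rho1 i) (rho12 i) * (bstar l1 l2 t - rho12 i))
      q (q + lam i).
  apply: RInt_le; [lra|apply: ex_RInt_phi; lra| |].
  - apply: (ex_RInt_profile
      (fun u v => f (rho1 i) (rho12 i) + d2 f (rho1 i) (rho12 i) * (v - rho12 i))); try lra.
    apply: cont_on_square_plus; first exact: cont_on_square_const.
    apply: cont_on_square_mult; first exact: cont_on_square_const.
    by apply: cont_on_square_minus; [apply: cont_on_square_snd|apply: cont_on_square_const].
  - move=> t ht; apply: DR_tangent_r => //; [apply: rho1_bounds|apply: rho12_bounds|].
    by apply: bstar_bounds; lra.
by rewrite RInt_affine ?RInt_bstar ?x_j12E; try (apply: ex_RInt_bstar; lra); lra.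
Qed.

Definition sigma := sort_by (fun i => d2 f (rho1 i) (rho12 i)) (enum I).

Lemma perm_sigma : perm_eq sigma (enum I).
Proof. exact: perm_sort_by. Qed.

Lemma pint_sigma_le_lhs : pint lam phi 0 sigma <= lhs.
Proof.
pose X i p :=
  d2 f (rho1 i) (rho12 i) * ((x i j1 + x i j2) - (bcum l1 l2 (p + lam i) - bcum l1 l2 p)).
have X_ge0 : 0 <= psum lam X 0 sigma.
  apply: (psum_abel_ge0 _ lam lam_ge0 (fun i => d2 f (rho1 i) (rho12 i))
    (fun i => x i j1 + x i j2) (bcum l1 l2) (fun i _ => d2 f (rho1 i) (rho12 i))) => //.
  - by move=> i p acc *; rewrite /X; right; ring.
  - exact: sorted_sort_by.
  - exact: RInt_point.
  - move=> k; apply: x_j12_prefix_le; apply: take_uniq.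
    by rewrite (perm_uniq perm_sigma) enum_uniq.
  - by rewrite !(lsum_perm_enum _ _ _ perm_sigma) bcum_Lam.
have : psum lam X 0 sigma <=
    psum lam (fun i p => lam i * f (rho1 i) (rho12 i) - RInt (phi i) p (p + lam i)) 0 sigma.
  by apply: psum_le => // i q hq; apply: RInt_phi_tangent_r.
rewrite psum_minus psum_const (lsum_perm_enum _ _ _ perm_sigma) -/lhs -/(pint lam phi 0 sigma).
lra.
Qed.

Definition tau := sort_by (fun i => - rho1 i) sigma.

Lemma perm_tau : perm_eq tau (enum I).
Proof. exact: perm_trans (perm_sort_by _ _ _) perm_sigma. Qed.

Lemma pint_tau_le_sigma : pint lam phi 0 tau <= pint lam phi 0 sigma.
Proof.
apply: pint_sort_by (Rle_refl 0) => // [i p q|i j hk y z hy hyz]; first exact: ex_RInt_phi.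
have := bstar_antitone l1 l2 y z hy hyz; have := bstar_bounds l1 l2 y hy.
have := bstar_bounds l1 l2 z ltac:(lra); have := rho1_bounds i; have := rho1_bounds j => *.
have := DR_increment_antitone f f_DR (rho1 i) (rho1 j) (bstar l1 l2 z) (bstar l1 l2 y).
by rewrite /phi; lra.
Qed.

Definition slope i t := d1 f (rho1 i) (bstar l1 l2 t).

Lemma ex_RInt_slope i p q : 0 <= p -> p <= q ->
  ex_RInt (fun t => slope i t * (rho1 i - astar l1 t)) p q.
Proof.
move=> hp hq; apply: (ex_RInt_profile (fun u v => d1 f (rho1 i) v * (rho1 i - u))) => //.
apply: cont_on_square_mult.
  by apply: cont_on_square_fix_l; [apply: rho1_bounds|apply: DR_continuous_d1].
by apply: cont_on_square_minus; [apply: cont_on_square_const|apply: cont_on_square_fst].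
Qed.

Lemma RInt_rho1_minus_astar i p t : 0 <= p -> p <= t ->
  RInt (fun s => rho1 i - astar l1 s) p t = (t - p) * rho1 i - (acum l1 t - acum l1 p).
Proof.
move=> hp ht; rewrite (RInt_ext _ (fun s => rho1 i + (-1) * (astar l1 s - 0))) => [|s _]; last lra.
by rewrite RInt_affine ?RInt_astar //; [lra|apply: ex_RInt_astar].
Qed.

Lemma RInt_slope_ge i p acc : 0 <= p ->
  acc - acum l1 p <= 0 -> acc + x i j1 - acum l1 (p + lam i) <= 0 ->
  RInt (fun t => slope i t * (rho1 i - astar l1 t)) p (p + lam i) >=
    slope i (p + lam i) * (acc + x i j1 - acum l1 (p + lam i)) - slope i p * (acc - acum l1 p).
Proof.
move=> hp h0 h1; have hl := lam_ge0 i; have ha := rho1_bounds i.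
have E1 : acc - acum l1 p + RInt (fun t => rho1 i - astar l1 t) p (p + lam i)
    = acc + x i j1 - acum l1 (p + lam i).
  by rewrite RInt_rho1_minus_astar ?x_j1E; [ring|lra|lra].
have ex_D y z : p <= y -> y <= z -> ex_RInt (fun t => rho1 i - astar l1 t) y z.
  by move=> hy hz; apply: ex_RInt_Rminus; [apply: ex_RInt_const|apply: ex_RInt_astar; lra].
rewrite -E1; apply: (RInt_mul_monotone_ge (slope i) _ _ _ _ 1)
  => [|y z hy hyz hz|t ht|y z *|y z *|t ht]; first lra.
- have := bstar_antitone l1 l2 y z ltac:(lra) hyz; have := bstar_bounds l1 l2 y ltac:(lra).
  have := bstar_bounds l1 l2 z ltac:(lra) => *.
  by rewrite /slope; apply: (DR_d1_antitone_r f f_DR); lra.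
- by have := astar_bounds l1 t ltac:(lra); move=> *; apply: Rabs_le; lra.
- by apply: ex_D.
- by apply: ex_RInt_slope; lra.
- apply: (RInt_nondecreasing_le0 _ p (p + lam i)) => // [y z hy hyz hz|y z *|]; last by rewrite E1.
  + by have := astar_antitone l1 y z ltac:(lra) hyz; lra.
  + by apply: ex_D.
Qed.

Lemma RInt_slope_le i p : 0 <= p ->
  RInt (fun t => slope i t * (rho1 i - astar l1 t)) p (p + lam i)
    <= RInt (phi i) p (p + lam i) - RInt psi p (p + lam i).
Proof.
move=> hp; have hl := lam_ge0 i.
rewrite -RInt_Rminus; [|apply: ex_RInt_phi; lra|apply: ex_RInt_psi; lra].
apply: RInt_le => [|||t ht]; first lra.
- by apply: ex_RInt_slope; lra.
- by apply: ex_RInt_Rminus; [apply: ex_RInt_phi|apply: ex_RInt_psi]; lra.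
have := DR_tangent_l f f_DR (rho1 i) (astar l1 t) (bstar l1 l2 t) (rho1_bounds i)
  (astar_bounds l1 t ltac:(lra)) (bstar_bounds l1 l2 t ltac:(lra)).
by rewrite /phi /psi /slope; lra.
Qed.

(* [tau] lists the types by decreasing [rho1], so the slopes increase along it. *)
Lemma RInt_psi_le_pint_tau : RInt psi 0 Lam <= pint lam phi 0 tau.
Proof.
pose X i p := RInt (fun t => slope i t * (rho1 i - astar l1 t)) p (p + lam i).
have X_ge0 : 0 <= psum lam X 0 tau.
  apply: (psum_abel_ge0 _ lam lam_ge0 (fun i => - rho1 i) (fun i => x i j1) (acum l1) slope)
    => //.
  - move=> i j hij t ht; apply: (DR_d1_antitone_l f f_DR); try lra.
    + by have := rho1_bounds j; lra.
    + by have := rho1_bounds i; lra.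
    + exact: bstar_bounds.
  - by move=> i p acc hp h0 h1; apply: RInt_slope_ge.
  - exact: sorted_sort_by.
  - exact: RInt_point.
  - move=> k; apply: x_j1_prefix_le; apply: take_uniq.
    by rewrite (perm_uniq perm_tau) enum_uniq.
  - by rewrite !(lsum_perm_enum _ _ _ perm_tau) acum_Lam.
have : psum lam X 0 tau <=
    psum lam (fun i p => RInt (phi i) p (p + lam i) - RInt psi p (p + lam i)) 0 tau.
  by apply: psum_le => // i q hq; apply: RInt_slope_le.
rewrite psum_minus -/(pint lam phi 0 tau) (psum_RInt _ lam lam_ge0) => [|y z hy hyz].
  2: by apply: ex_RInt_psi; lra.
by rewrite Rplus_0_l (lsum_perm_enum _ _ _ perm_tau) -/Lam; lra.
Qed.

Lemma RInt_psi_le_lhs : RInt psi 0 Lam <= lhs.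
Proof.
by have := pint_sigma_le_lhs; have := pint_tau_le_sigma; have := RInt_psi_le_pint_tau; lra.
Qed.

Hypothesis f_normalized : normalized f.

Lemma RInt_psi_split c1 c2 (g1 g2 : R -> R) : 0 <= c1 -> c1 <= c2 -> c2 <= Lam ->
  (forall s, 0 < s < c1 -> psi s = g1 s) -> (forall s, c1 < s < c2 -> psi s = g2 s) ->
  (forall s, c2 < s -> astar l1 s = 0 /\ bstar l1 l2 s = 0) ->
  RInt psi 0 Lam = RInt g1 0 c1 + RInt g2 c1 c2.
Proof.
move=> h1 h12 h2 E1 E2 E3.
rewrite -(RInt_Chasles psi 0 c1 Lam) ?(RInt_ext psi g1 0 c1); try (apply: ex_RInt_psi; lra).
  rewrite -(RInt_Chasles psi c1 c2 Lam) ?(RInt_ext psi g2 c1 c2); try (apply: ex_RInt_psi; lra).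
    rewrite (RInt_eq0 psi c2 Lam) // /plus /= => [|s hs]; first lra.
    by rewrite /psi; case: (E3 s ltac:(lra)) => -> ->.
  by rewrite Rmin_left // Rmax_right // => s hs; apply: E2.
by rewrite Rmin_left // Rmax_right // => s hs; apply: E1.
Qed.

Lemma RInt_psi_l1_le_l2 : l1 <= l2 ->
  RInt psi 0 Lam =
    RInt (fun l => f (Pk 0 l) (Pk 1 l)) 0 l1 + RInt (fun l => f 0 (Pk 1 l)) l1 l2.
Proof.
move=> hl; apply: RInt_psi_split => // [|s hs|s hs|s hs]; first exact: l2_le_Lam.
all: by rewrite /psi /astar /bstar; repeat (case: Rlt_dec => ? /=; try lra).
Qed.

Lemma RInt_psi_l2_lt_l1 : l2 < l1 ->
  RInt psi 0 Lam =
    RInt (fun l => f (Pk 0 l) (Pk 1 l)) 0 l2 + RInt (fun l => f (Pk 0 l) (Pk 0 l)) l2 l1.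
Proof.
move=> hl; apply: RInt_psi_split => // [||s hs|s hs|s hs]; [lra|exact: l1_le_Lam|..].
all: by rewrite /psi /astar /bstar; repeat (case: Rlt_dec => ? /=; try lra).
Qed.

End PoissonMatchingInstance.

Theorem mainTheorem10 (I J : finType) (lam : I -> R) (E : I -> J -> bool)
    (x : I -> J -> R) (f : R -> R -> R) (j1 j2 : J) (l1 l2 : R) :
  (forall i, 0 < lam i) ->
  in_PM2 lam E x ->
  normalized f -> DR_submodular f ->
  j1 <> j2 ->
  0 <= l1 -> 0 <= l2 ->
  rsum predT (fun i => x i j1) = 1 - Pk 0 l1 ->
  rsum predT (fun i => x i j2) =
    (2 - Pk 0 l2 - Pk 1 l2) - (1 - Pk 0 (Rmin l1 l2)) ->
  (l1 <= l2 ->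
    rsum predT (fun i => lam i * f (x i j1 / lam i) (x i j1 / lam i + x i j2 / lam i))
    >= RInt (fun l => f (Pk 0 l) (Pk 1 l)) 0 l1
       + RInt (fun l => f 0 (Pk 1 l)) l1 l2) /\
  (l1 > l2 ->
    rsum predT (fun i => lam i * f (x i j1 / lam i) (x i j1 / lam i + x i j2 / lam i))
    >= RInt (fun l => f (Pk 0 l) (Pk 1 l)) 0 l2
       + RInt (fun l => f (Pk 0 l) (Pk 0 l)) l2 l1).
Proof.
move=> lam_gt0 x_PM2 f_norm f_DR j12 l1_ge0 l2_ge0 x1 x2.
have lhs_ge := RInt_psi_le_lhs I J lam E x f j1 j2 l1 l2 lam_gt0 x_PM2 f_DR j12 l1_ge0 l2_ge0 x1 x2.
split=> hl; apply: Rle_ge; apply: Rle_trans lhs_ge; apply: Req_le_sym.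
- by apply: (RInt_psi_l1_le_l2 I J lam E x f j1 j2).
- by apply: (RInt_psi_l2_lt_l1 I J lam E x f j1) => //; lra.
Qed.
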